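(* In a pairing heap with $n$ elements, decrease-key takes $O(\log n)$ amortized time with respect to the potential $\Phi$.
   Context: A pairing heap is a heap-ordered rooted ordered tree (the ''general view''): each node stores a key, has zero or more children ordered from left to right, and every child has a strictly larger key than its parent. It is stored in the ''binary view'' via the leftmost-child/right-sibling correspondence: the left child of $x$ in the binary view is the leftmost child of $x$ in the general view, and the right child of $x$ in the binary view is the next sibling to the right of $x$ in the general view. Pairing two heap-ordered trees makes the root with the larger key the leftmost child of the other root. Operations: make-heap returns an empty heap; get-min returns the root key; insert creates a new node, which becomes the root if the heap is empty and otherwise is paired with the root; decrease-key$(p,y)$ (with $y$ strictly less than the current key of the node $p$) sets the key to $y$ and, if the node is not the root, detaches it (with its general-view subtree) from its parent and pairs it with the root; delete-min removes the root, then (first pass) pairs the root's former children in consecutive pairs from left to right, then (second pass) repeatedly pairs the two rightmost remaining trees until one tree remains. The actual cost of an operation is $1$ plus the number of pairings it performs, and its amortized cost is its actual cost plus the resulting change in $\Phi$. The heap is assumed to arise from a sequence of such operations starting from an empty heap. Sticky size: $N$ is initially $1$; after every heap operation, if $n \ge 2N$ then $N$ is doubled, and if $n \le N/2$ then $N$ is halved, where $n$ is the current number of elements. Let $\lg = \log_2$. For a node $x$, $|x|$ is the number of nodes in the subtree rooted at $x$ in the binary view, and $x_L$, $x_R$ are its left and right children in the binary view (a missing child has size $0$). Node potential $\phi_x$: if $|x_L| > \lg N$ and $|x_R| > \lg N$, $x$ is large and $\phi_x = 400 + 100\lg|x|$; if $|x_L| \le \lg N < |x_R|$, $x$ is mixed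 and $\phi_x = 400 + 100\frac{|x_L|}{\lg N}\lg|x|$ (symmetrically, if $|x_R| \le \lg N < |x_L|$, $\phi_x = 400 + 100\frac{|x_R|}{\lg N}\lg|x|$); if both $|x_L|,|x_R| \le \lg N$, $x$ is small and $\phi_x = 0$. Edge potential: an edge of the binary view joining a large node to its right child that is also large has potential $-7$; all other edges have potential $0$. $\Phi = 900|N-n| + \sum_x \phi_x + (\text{sum of edge potentials})$. *)

From Stdlib Require Import Reals List.
Import ListNotations.
Open Scope R_scope.

(** Pairing heaps, stored in the binary view (leftmost-child / right-sibling).
    [Node k l r]: key [k], left child [l] (leftmost child in the general view),
    right child [r] (next sibling in the general view). *)
Inductive bt : Type :=
| Leaf : bt
| Node : R -> bt -> bt -> bt.

Fixpoint size (t : bt) : nat :=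
  match t with
  | Leaf => 0%nat
  | Node _ l r => S (size l + size r)
  end.

Definition lg (x : R) : R := ln x / ln 2.

(** A node reference: the path from the root in the binary view
    ([false] = go to left child, [true] = go to right child). *)
Fixpoint get (t : bt) (p : list bool) : bt :=
  match p, t with
  | [], _ => t
  | b :: p', Node _ l r => get (if b then r else l) p'
  | _ :: _, Leaf => Leaf
  end.

Fixpoint replace (t : bt) (p : list bool) (s : bt) : bt :=
  match p, t with
  | [], _ => s
  | false :: p', Node k l r => Node k (replace l p' s) r
  | true :: p', Node k l r => Node k l (replace r p' s)
  | _ :: _, Leaf => Leaf
  end.

(** Pairing of two heap-ordered trees (their binary-view right children are
    ignored / assumed empty): the root with the larger key becomes the leftmost
    child of the other. *)
Definition link (t1 t2 : bt) : bt :=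
  match t1, t2 with
  | Leaf, _ => t2
  | _, Leaf => t1
  | Node a la _, Node b lb _ =>
      if Rlt_dec b a then Node b (Node a la lb) Leaf
      else Node a (Node b lb la) Leaf
  end.

(** The list of general-view trees hanging on the right spine of a binary tree
    (i.e. a node's children list when applied to its left child). *)
Fixpoint spine (t : bt) : list bt :=
  match t with
  | Leaf => []
  | Node k l r => Node k l Leaf :: spine r
  end.

Fixpoint pass1 (ts : list bt) : list bt :=
  match ts with
  | a :: b :: rest => link a b :: pass1 rest
  | _ => ts
  end.

Fixpoint pass2 (ts : list bt) : bt :=
  match ts with
  | [] => Leaf
  | [t] => t
  | t :: rest => link t (pass2 rest)
  end.

(** Heap operations (results only; the heap is the binary view of its root). *)
Definition insert (h : bt) (x : R) : bt :=
  match h with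
  | Leaf => Node x Leaf Leaf
  | _ => link h (Node x Leaf Leaf)
  end.

Definition delete_min (h : bt) : bt :=
  match h with
  | Leaf => Leaf
  | Node _ l _ => pass2 (pass1 (spine l))
  end.

(** decrease-key(p, y): result heap and actual cost (1 + number of pairings). *)
Definition decrease_key (h : bt) (p : list bool) (y : R) : bt * nat :=
  match p with
  | [] =>
      match h with
      | Node _ l r => (Node y l r, 1%nat)
      | Leaf => (Leaf, 1%nat)
      end
  | _ :: _ =>
      match get h p with
      | Node _ l r => (link (replace h p r) (Node y l Leaf), 2%nat)
      | Leaf => (h, 1%nat)
      end
  end.

Definition updN (n : nat) (N : R) : R :=
  if Rle_dec (2 * N) (INR n) then 2 * N
  else if Rle_dec (INR n) (N / 2) then N / 2
  else N.

Definition phi (N : R) (l r : bt) : R :=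
  let sl := INR (size l) in
  let sr := INR (size r) in
  let s := INR (S (size l + size r)) in
  let L := lg N in
  if Rlt_dec L sl then
    if Rlt_dec L sr then 400 + 100 * lg s
    else 400 + 100 * (sr / L) * lg s
  else
    if Rlt_dec L sr then 400 + 100 * (sl / L) * lg s
    else 0.

Definition is_large (N : R) (l r : bt) : bool :=
  if Rlt_dec (lg N) (INR (size l)) then
    if Rlt_dec (lg N) (INR (size r)) then true else false
  else false.

Definition edge_pot (N : R) (l r : bt) : R :=
  match r with
  | Node _ rl rr => if andb (is_large N l r) (is_large N rl rr) then -7 else 0
  | Leaf => 0
  end.

Fixpoint tree_pot (N : R) (t : bt) : R :=
  match t with
  | Leaf => 0
  | Node _ l r => phi N l r + edge_pot N l r + tree_pot N l + tree_pot N r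
  end.

Definition Phi (h : bt) (N : R) : R :=
  900 * Rabs (N - INR (size h)) + tree_pot N h.

Inductive step : bt * R -> bt * R -> Prop :=
| step_insert : forall h N x,
    step (h, N) (insert h x, updN (size (insert h x)) N)
| step_get_min : forall h N,
    h <> Leaf -> step (h, N) (h, updN (size h) N)
| step_delete_min : forall h N,
    h <> Leaf -> step (h, N) (delete_min h, updN (size (delete_min h)) N)
| step_decrease_key : forall h N p k l r y,
    get h p = Node k l r -> y < k ->
    step (h, N) (fst (decrease_key h p y),
                 updN (size (fst (decrease_key h p y))) N).

Inductive reachable : bt * R -> Prop :=
| reach_init : reachable (Leaf, 1)
| reach_step : forall s s', reachable s -> step s s' -> reachable s'.

Definition dk_amortized (h : bt) (N : R) (p : list bool) (y : R) : R :=
  let res := decrease_key h p y in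
  let h' := fst res in
  let N' := updN (size h') N in
  INR (snd res) + (Phi h' N' - Phi h N).

From Stdlib Require Import Reals List Lra Lia Bool.
Import ListNotations.
Open Scope R_scope.

(* In a reachable state the root has no sibling, the size is unchanged by
   decrease-key and n lies strictly between N/2 and 2N, so N is not updated,
   the term 900|N - n| does not move and lg N < 1 + lg n.  Cutting the node x
   out of its parent only shrinks the binary subtrees of the nodes on the
   path from the root to x, so their node potentials do not increase; the
   only increases come from edge potentials -7 that disappear when a node
   stops being large.  A node on the path stops being large only when its
   shrinking child drops to size at most lg N, and the subtree sizes grow
   along the path, so this happens at most lg N + 1 times, each time costing
   at most 21.  Finally, the two roots paired at the end have node potential
   at most 400 + 100 lg n each. *)

Lemma ln2_pos : 0 < ln 2.
Proof. pose proof ln_lt_2; lra. Qed.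

Lemma lg_le_compat x y : 0 < x -> x <= y -> lg x <= lg y.
Proof.
  intros Hx [Hxy|<-]; [|lra]. unfold lg, Rdiv.
  apply Rmult_le_compat_r; [left; apply Rinv_0_lt_compat, ln2_pos|].
  left; apply ln_increasing; lra.
Qed.

Lemma lg_lt_compat x y : 0 < x -> x < y -> lg x < lg y.
Proof.
  intros Hx Hxy. unfold lg, Rdiv.
  apply Rmult_lt_compat_r; [apply Rinv_0_lt_compat, ln2_pos|].
  apply ln_increasing; lra.
Qed.

Lemma lg_1 : lg 1 = 0.
Proof. unfold lg. rewrite ln_1. lra. Qed.

Lemma lg_nonneg x : 1 <= x -> 0 <= lg x.
Proof. intros. rewrite <- lg_1. apply lg_le_compat; lra. Qed.

Lemma lg_double x : 0 < x -> lg (2 * x) = 1 + lg x.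
Proof.
  intros. pose proof ln2_pos. unfold lg. rewrite ln_mult by lra. field. lra.
Qed.

Lemma lg_half : lg (1 / 2) = -1.
Proof.
  pose proof (lg_double (1 / 2) ltac:(lra)) as E.
  replace (2 * (1 / 2)) with 1 in E by field. rewrite lg_1 in E. lra.
Qed.

Lemma INR_S_ge1 n : 1 <= INR (S n).
Proof. rewrite S_INR. pose proof (pos_INR n). lra. Qed.

(* With [L = 0] the ratio is [a / 0 = 0]. *)
Lemma ratio_unit_interval a L : 0 <= a -> a <= L -> 0 <= a / L <= 1.
Proof.
  intros Ha HL. destruct (Req_dec L 0) as [->|E].
  - replace a with 0 by lra. unfold Rdiv. lra.
  - split; [apply Rmult_le_pos; [lra|left; apply Rinv_0_lt_compat; lra]|].
    apply (Rmult_le_reg_r L); [lra|]. unfold Rdiv. rewrite Rmult_assoc, Rinv_l; lra.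
Qed.

Lemma ratio_le_compat a b L : 0 <= a -> a <= b -> b <= L -> a / L <= b / L.
Proof.
  intros Ha Hab HL. destruct (Req_dec L 0) as [->|E].
  - replace a with 0 by lra. replace b with 0 by lra. lra.
  - unfold Rdiv. apply Rmult_le_compat_r; [left; apply Rinv_0_lt_compat; lra|lra].
Qed.

Lemma phi_nonneg N l r : 0 <= phi N l r.
Proof.
  unfold phi.
  pose proof (pos_INR (size l)). pose proof (pos_INR (size r)).
  pose proof (lg_nonneg _ (INR_S_ge1 (size l + size r))).
  destruct (Rlt_dec (lg N) (INR (size l))), (Rlt_dec (lg N) (INR (size r))).
  - lra.
  - pose proof (ratio_unit_interval (INR (size r)) (lg N) ltac:(lra) ltac:(lra)). nra.
  - pose proof (ratio_unit_interval (INR (size l)) (lg N) ltac:(lra) ltac:(lra)). nra.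
  - lra.
Qed.

Lemma phi_le_lg_size N l r : phi N l r <= 400 + 100 * lg (INR (S (size l + size r))).
Proof.
  unfold phi.
  pose proof (pos_INR (size l)). pose proof (pos_INR (size r)).
  pose proof (lg_nonneg _ (INR_S_ge1 (size l + size r))).
  destruct (Rlt_dec (lg N) (INR (size l))), (Rlt_dec (lg N) (INR (size r))).
  - lra.
  - pose proof (ratio_unit_interval (INR (size r)) (lg N) ltac:(lra) ltac:(lra)). nra.
  - pose proof (ratio_unit_interval (INR (size l)) (lg N) ltac:(lra) ltac:(lra)). nra.
  - lra.
Qed.

Lemma phi_le_lg N l r n : (S (size l + size r) <= n)%nat -> phi N l r <= 400 + 100 * lg (INR n).
Proof.
  intros Hn. pose proof (phi_le_lg_size N l r).
  enough (lg (INR (S (size l + size r))) <= lg (INR n)) by lra.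
  apply lg_le_compat; [pose proof (INR_S_ge1 (size l + size r)); lra|apply le_INR, Hn].
Qed.

Lemma is_large_spec N l r :
  is_large N l r = true <-> lg N < INR (size l) /\ lg N < INR (size r).
Proof.
  unfold is_large.
  destruct (Rlt_dec (lg N) (INR (size l))), (Rlt_dec (lg N) (INR (size r)));
    split; intros; try discriminate; tauto.
Qed.

Lemma is_large_false N l r : is_large N l r = false ->
  INR (size l) <= lg N \/ INR (size r) <= lg N.
Proof.
  intros H. destruct (Rle_dec (INR (size l)) (lg N)); [now left|].
  destruct (Rle_dec (INR (size r)) (lg N)); [now right|].
  enough (is_large N l r = true) by congruence. apply is_large_spec; lra.
Qed.

Lemma is_large_mono N l r l' r' : (size l' <= size l)%nat -> (size r' <= size r)%nat ->
  is_large N l' r' = true -> is_large N l r = true.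
Proof.
  intros Hl Hr H. apply is_large_spec in H. apply is_large_spec.
  apply le_INR in Hl. apply le_INR in Hr. lra.
Qed.

Lemma phi_large_ge N l r : is_large N l r = true -> 400 <= phi N l r.
Proof.
  unfold is_large, phi. pose proof (lg_nonneg _ (INR_S_ge1 (size l + size r))).
  destruct (Rlt_dec (lg N) (INR (size l))), (Rlt_dec (lg N) (INR (size r)));
    try discriminate; lra.
Qed.

Lemma phi_mono N l r l' r' : (size l' <= size l)%nat -> (size r' <= size r)%nat ->
  phi N l' r' <= phi N l r.
Proof.
  intros Hl Hr. pose proof (phi_nonneg N l r). unfold phi in *.
  apply le_INR in Hl. apply le_INR in Hr.
  pose proof (pos_INR (size l')). pose proof (pos_INR (size r')).
  assert (lg (INR (S (size l' + size r'))) <= lg (INR (S (size l + size r)))).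
  { apply lg_le_compat; [pose proof (INR_S_ge1 (size l' + size r')); lra|].
    rewrite !S_INR, !plus_INR. lra. }
  pose proof (lg_nonneg _ (INR_S_ge1 (size l' + size r'))).
  destruct (Rlt_dec (lg N) (INR (size l'))), (Rlt_dec (lg N) (INR (size r'))),
    (Rlt_dec (lg N) (INR (size l))), (Rlt_dec (lg N) (INR (size r))); try lra.
  - pose proof (ratio_unit_interval (INR (size r')) (lg N) ltac:(lra) ltac:(lra)). nra.
  - pose proof (ratio_unit_interval (INR (size r')) (lg N) ltac:(lra) ltac:(lra)).
    pose proof (ratio_le_compat (INR (size r')) (INR (size r)) (lg N) ltac:(lra) Hr ltac:(lra)).
    nra.
  - pose proof (ratio_unit_interval (INR (size l')) (lg N) ltac:(lra) ltac:(lra)). nra.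
  - pose proof (ratio_unit_interval (INR (size l')) (lg N) ltac:(lra) ltac:(lra)).
    pose proof (ratio_le_compat (INR (size l')) (INR (size l)) (lg N) ltac:(lra) Hl ltac:(lra)).
    nra.
Qed.

Definition is_large_tree (N : R) (t : bt) : bool :=
  match t with Leaf => false | Node _ a b => is_large N a b end.

Lemma edge_potE N l r :
  edge_pot N l r = if is_large N l r && is_large_tree N r then -7 else 0.
Proof. destruct r; simpl; [destruct (is_large N l Leaf)|]; reflexivity. Qed.

Lemma edge_pot_bounds N l r : -7 <= edge_pot N l r <= 0.
Proof. rewrite edge_potE. destruct (_ && _); lra. Qed.

(** * Shape of reachable heaps *)

Definition is_tree (t : bt) : Prop := exists k l, t = Node k l Leaf.
Definition heap_shape (h : bt) : Prop := h = Leaf \/ is_tree h.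

Lemma link_tree a b : is_tree a -> is_tree b ->
  is_tree (link a b) /\ size (link a b) = (size a + size b)%nat.
Proof.
  intros [ka [la ->]] [kb [lb ->]]. simpl.
  destruct (Rlt_dec kb ka); (split; [eexists; eexists; reflexivity|simpl; lia]).
Qed.

Lemma spine_trees t : Forall is_tree (spine t) /\ list_sum (map size (spine t)) = size t.
Proof.
  induction t as [|k l _ r [Htrees Hsize]]; simpl; [auto|].
  split; [constructor; [exists k, l|]|]; auto; lia.
Qed.

Lemma pass1_trees ts : Forall is_tree ts ->
  Forall is_tree (pass1 ts) /\ list_sum (map size (pass1 ts)) = list_sum (map size ts).
Proof.
  revert ts. fix IH 1. intros [|a [|b rest]] H; simpl; auto.
  inversion H as [|? ? Ha Hr]; subst. inversion Hr as [|? ? Hb Hrest]; subst.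
  destruct (link_tree a b Ha Hb) as [Hab Hsab].
  destruct (IH rest Hrest) as [Htrees Hsize].
  split; [constructor|simpl; lia]; auto.
Qed.

Lemma pass2_tree ts : Forall is_tree ts -> ts <> [] ->
  is_tree (pass2 ts) /\ size (pass2 ts) = list_sum (map size ts).
Proof.
  induction ts as [|a [|b rest] IH]; intros H Hne; [congruence| |].
  - inversion H; subst. simpl. split; [|lia]; auto.
  - inversion H as [|? ? Ha Hrest]; subst.
    destruct (IH Hrest ltac:(discriminate)) as [Htree Hsize].
    change (pass2 (a :: b :: rest)) with (link a (pass2 (b :: rest))).
    destruct (link_tree a _ Ha Htree) as [Hl Hsl].
    split; [auto|]. rewrite Hsl, Hsize. simpl. lia.
Qed.

Lemma insert_shape h x : heap_shape h ->
  heap_shape (insert h x) /\ size (insert h x) = S (size h).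
Proof.
  intros [->|[c [X ->]]]; [split; [right; eexists; eexists|]; reflexivity|].
  destruct (link_tree (Node c X Leaf) (Node x Leaf Leaf)) as [Ht Hs];
    try (eexists; eexists; reflexivity).
  split; [now right|]. simpl in Hs |- *. lia.
Qed.

Lemma delete_min_shape h : heap_shape h -> h <> Leaf ->
  heap_shape (delete_min h) /\ S (size (delete_min h)) = size h.
Proof.
  intros [->|[c [X ->]]] Hne; [congruence|]. simpl.
  destruct (spine_trees X) as [Hsp Hssp].
  destruct (pass1_trees _ Hsp) as [Hp1 Hsp1].
  destruct (spine X) as [|t ts] eqn:E.
  - simpl in *. split; [now left|lia].
  - destruct (pass2_tree (pass1 (t :: ts)) Hp1) as [Hp2 Hsp2].
    { destruct ts; discriminate. }
    split; [now right|]. lia.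
Qed.

Lemma get_Leaf p : get Leaf p = Leaf.
Proof. now destruct p. Qed.

Lemma size_replace p t s k l r : get t p = Node k l r ->
  (size (replace t p s) + S (size l + size r) = size t + size s)%nat.
Proof.
  revert t. induction p as [|[] p IH]; intros [|c X Y] Hg;
    try (rewrite get_Leaf in Hg; discriminate); simpl in Hg |- *.
  - injection Hg as -> -> ->. simpl. lia.
  - specialize (IH Y Hg). lia.
  - specialize (IH X Hg). lia.
Qed.

(* A reachable heap is [Node c A0 Leaf], so a non-root node lies in [A0]. *)
Lemma decrease_key_nonroot c A0 q k l r y : get A0 q = Node k l r ->
  decrease_key (Node c A0 Leaf) (false :: q) y =
  (link (Node c (replace A0 q r) Leaf) (Node y l Leaf), 2%nat).
Proof. intros Hg. unfold decrease_key. simpl. now rewrite Hg. Qed.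

Lemma decrease_key_shape h p k l r y : heap_shape h -> get h p = Node k l r ->
  heap_shape (fst (decrease_key h p y)) /\ size (fst (decrease_key h p y)) = size h.
Proof.
  intros [->|[c [X ->]]] Hg; [rewrite get_Leaf in Hg; discriminate|].
  destruct p as [|[] q]; simpl in Hg.
  - injection Hg as -> -> <-. simpl. split; [right; eexists; eexists|]; reflexivity.
  - destruct q; discriminate.
  - rewrite (decrease_key_nonroot _ _ _ _ _ _ _ Hg). cbn [fst].
    destruct (link_tree (Node c (replace X q r) Leaf) (Node y l Leaf)) as [Ht Hs];
      try (eexists; eexists; reflexivity).
    pose proof (size_replace q X r k l r Hg).
    split; [now right|]. rewrite Hs. simpl. lia.
Qed.

(** * The sticky size *)

(* An empty heap is either the initial one (N = 1) or the result of deleting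
   the last element, which halves an N in (1/2, 2). *)
Definition sticky_ok (n : nat) (N : R) : Prop :=
  0 < N /\ (n = 0%nat -> 1/4 < N <= 1) /\ ((1 <= n)%nat -> N / 2 < INR n < 2 * N).

Lemma updN_stable n N : N / 2 < INR n < 2 * N -> updN n N = N.
Proof.
  intros. unfold updN.
  destruct (Rle_dec (2 * N) (INR n)); [lra|].
  destruct (Rle_dec (INR n) (N / 2)); [lra|reflexivity].
Qed.

Lemma sticky_lg_bounds n N : 1 <= INR n -> N / 2 < INR n < 2 * N ->
  -1 < lg N < 1 + lg (INR n).
Proof.
  intros Hn HN. rewrite <- lg_half, <- lg_double by lra.
  split; apply lg_lt_compat; lra.
Qed.

Lemma sticky_ok_updN m n N : sticky_ok m N ->
  n = S m \/ m = S n \/ (n = m /\ (1 <= n)%nat) -> sticky_ok n (updN n N).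
Proof.
  intros [HN [H0 H1]] Hnm.
  assert (Hnm' : INR n = INR m + 1 \/ INR m = INR n + 1 \/ (INR n = INR m /\ 1 <= INR n)).
  { destruct Hnm as [->|[->|[-> Hm]]]; rewrite ?S_INR; [lra|lra|].
    apply (le_INR 1) in Hm. simpl in Hm. lra. }
  assert (Hm : (m = 0%nat /\ INR m = 0) \/ (1 <= m)%nat /\ 1 <= INR m).
  { destruct m; [now left|right]. split; [lia|apply INR_S_ge1]. }
  assert (Hn : (n = 0%nat /\ INR n = 0) \/ (1 <= n)%nat /\ 1 <= INR n).
  { destruct n; [now left|right]. split; [lia|apply INR_S_ge1]. }
  unfold sticky_ok, updN.
  destruct Hm as [[Em Em']|[Em Em']]; [specialize (H0 Em)|specialize (H1 Em)];
  destruct Hn as [[En En']|[En En']];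
  repeat match goal with |- context [Rle_dec ?a ?b] => destruct (Rle_dec a b) end;
  repeat split; intros; try lia; lra.
Qed.

Lemma reachable_invariant s : reachable s ->
  heap_shape (fst s) /\ sticky_ok (size (fst s)) (snd s).
Proof.
  induction 1 as [|s s' _ [Hshape Hsticky] Hstep].
  - simpl. split; [now left|]. split; [lra|split; intros; [lra|lia]].
  - destruct Hstep as [h N x | h N Hne | h N Hne | h N p k l r y Hg _];
      simpl in Hshape, Hsticky |- *.
    + destruct (insert_shape h x Hshape) as [Hs Hsz].
      split; [auto|]. apply (sticky_ok_updN (size h)); auto.
    + split; [auto|]. apply (sticky_ok_updN (size h)); auto.
      destruct h; [congruence|]. right; right; simpl; split; [reflexivity|lia].
    + destruct (delete_min_shape h Hshape Hne) as [Hs Hsz].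
      split; [auto|]. apply (sticky_ok_updN (size h)); auto.
    + destruct (decrease_key_shape h p k l r y Hshape Hg) as [Hs Hsz].
      split; [auto|]. apply (sticky_ok_updN (size h)); auto.
      destruct h; [rewrite get_Leaf in Hg; discriminate|].
      rewrite Hsz. right; right; simpl; split; [reflexivity|lia].
Qed.

(** * Potential change along the cut path *)

(* The potential released at the parent edge of a subtree whose root stops
   being large. *)
Definition lost_large (N : R) (t t' : bt) : R :=
  if is_large_tree N t && negb (is_large_tree N t') then 7 else 0.

Lemma lost_large_bounds N t t' : 0 <= lost_large N t t' <= 7.
Proof. unfold lost_large. destruct (_ && _); lra. Qed.

(* At most 7 for the parent edge, plus 21 for each of the at most lg N + 1
   nodes of the path that stop being large. *)
Definition path_budget (N : R) (m : nat) : R := 7 + 21 * Rmin (INR m) (lg N + 1).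

Lemma path_budget_ge7 N m : -1 <= lg N -> 7 <= path_budget N m.
Proof.
  intros. unfold path_budget. pose proof (pos_INR m).
  enough (0 <= Rmin (INR m) (lg N + 1)) by lra. apply Rmin_glb; lra.
Qed.

Lemma path_budget_le N m : path_budget N m <= 7 + 21 * (lg N + 1).
Proof. unfold path_budget. pose proof (Rmin_r (INR m) (lg N + 1)). lra. Qed.

Lemma path_budget_mono N m m' : (m' <= m)%nat -> path_budget N m' <= path_budget N m.
Proof.
  intros H. unfold path_budget. apply le_INR in H.
  pose proof (Rle_min_compat_r _ _ (lg N + 1) H). lra.
Qed.

Lemma path_budget_jump N m m' : (m' < m)%nat -> INR m' <= lg N ->
  path_budget N m' + 21 <= path_budget N m.
Proof.
  intros Hm Hlg. unfold path_budget. rewrite Rmin_left by lra.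
  assert (INR m' + 1 <= INR m) by (rewrite <- S_INR; apply le_INR; lia).
  enough (INR m' + 1 <= Rmin (INR m) (lg N + 1)) by lra. apply Rmin_glb; lra.
Qed.

Lemma budget_step_right N c X Y Y' D : (size Y' <= size Y)%nat ->
  D + lost_large N Y Y' <= path_budget N (size Y') ->
  D + (phi N X Y' - phi N X Y) + (edge_pot N X Y' - edge_pot N X Y)
    + lost_large N (Node c X Y) (Node c X Y') <= path_budget N (S (size X + size Y')).
Proof.
  intros Hs IH.
  pose proof (phi_mono N X Y X Y' (le_n _) Hs).
  pose proof (path_budget_mono N (S (size X + size Y')) (size Y') ltac:(lia)).
  assert (Hmono : is_large N X Y' = true -> is_large N X Y = true)
    by (apply is_large_mono; lia).
  assert (Hjump : is_large N X Y = true -> is_large N X Y' = false ->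
    path_budget N (size Y') + 21 <= path_budget N (S (size X + size Y'))).
  { intros H1 H2. apply path_budget_jump; [lia|].
    apply is_large_spec in H1. destruct (is_large_false _ _ _ H2); lra. }
  unfold lost_large in *. rewrite !edge_potE. cbn [is_large_tree].
  destruct (is_large N X Y) eqn:E1, (is_large N X Y') eqn:E2;
    [| specialize (Hjump eq_refl eq_refl) | discriminate (Hmono eq_refl) |];
    destruct (is_large_tree N Y), (is_large_tree N Y'); simpl in *; lra.
Qed.

Lemma budget_step_left N c X X' Y D : (size X' <= size X)%nat ->
  D <= path_budget N (size X') ->
  D + (phi N X' Y - phi N X Y) + (edge_pot N X' Y - edge_pot N X Y)
    + lost_large N (Node c X Y) (Node c X' Y) <= path_budget N (S (size X' + size Y)).
Proof.
  intros Hs IH.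
  pose proof (phi_mono N X Y X' Y Hs (le_n _)).
  pose proof (path_budget_mono N (S (size X' + size Y)) (size X') ltac:(lia)).
  assert (Hmono : is_large N X' Y = true -> is_large N X Y = true)
    by (apply is_large_mono; lia).
  assert (Hjump : is_large N X Y = true -> is_large N X' Y = false ->
    path_budget N (size X') + 21 <= path_budget N (S (size X' + size Y))).
  { intros H1 H2. apply path_budget_jump; [lia|].
    apply is_large_spec in H1. destruct (is_large_false _ _ _ H2); lra. }
  unfold lost_large. rewrite !edge_potE. cbn [is_large_tree].
  destruct (is_large N X Y) eqn:E1, (is_large N X' Y) eqn:E2;
    [| specialize (Hjump eq_refl eq_refl) | discriminate (Hmono eq_refl) |];
    destruct (is_large_tree N Y); simpl; lra.
Qed.

Lemma tree_pot_cut_le N : -1 <= lg N -> forall q t k l r, get t q = Node k l r ->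
  tree_pot N (replace t q r) + tree_pot N l - tree_pot N t + lost_large N t (replace t q r)
    <= path_budget N (size (replace t q r)).
Proof.
  intros HN q. induction q as [|[] q IH]; intros [|c X Y] k l r Hg;
    try (rewrite get_Leaf in Hg; discriminate); simpl in Hg.
  - injection Hg as -> -> ->. cbn [replace tree_pot].
    pose proof (path_budget_ge7 N (size r) HN).
    pose proof (edge_pot_bounds N l r). pose proof (phi_nonneg N l r).
    unfold lost_large. rewrite edge_potE. cbn [is_large_tree].
    destruct (is_large N l r) eqn:E; simpl.
    + pose proof (phi_large_ge N l r E). destruct (is_large_tree N r); simpl; lra.
    + lra.
  - pose proof (size_replace q Y r k l r Hg).
    pose proof (budget_step_right N c X Y (replace Y q r)
      (tree_pot N (replace Y q r) + tree_pot N l - tree_pot N Y) ltac:(lia) (IH Y k l r Hg)).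
    cbn [replace tree_pot size]. lra.
  - pose proof (size_replace q X r k l r Hg).
    pose proof (lost_large_bounds N X (replace X q r)). specialize (IH X k l r Hg).
    pose proof (budget_step_left N c X (replace X q r) Y
      (tree_pot N (replace X q r) + tree_pot N l - tree_pot N X) ltac:(lia) ltac:(lra)).
    cbn [replace tree_pot size]. lra.
Qed.

Lemma tree_pot_link_le N a b A B :
  tree_pot N (link (Node a A Leaf) (Node b B Leaf)) <=
  tree_pot N A + tree_pot N B + 2 * (400 + 100 * lg (INR (S (S (size A + size B))))).
Proof.
  pose proof (edge_pot_bounds N A B). pose proof (edge_pot_bounds N B A).
  unfold link. destruct (Rlt_dec b a); cbn [tree_pot edge_pot].
  - pose proof (phi_le_lg N (Node a A B) Leaf (S (S (size A + size B))) ltac:(simpl; lia)).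
    pose proof (phi_le_lg N A B (S (S (size A + size B))) ltac:(lia)). lra.
  - pose proof (phi_le_lg N (Node b B A) Leaf (S (S (size A + size B))) ltac:(simpl; lia)).
    pose proof (phi_le_lg N B A (S (S (size A + size B))) ltac:(lia)). lra.
Qed.

Lemma tree_pot_decrease_key_le N c A0 q k l r y : -1 <= lg N -> get A0 q = Node k l r ->
  tree_pot N (fst (decrease_key (Node c A0 Leaf) (false :: q) y))
    - tree_pot N (Node c A0 Leaf)
  <= 2 * (400 + 100 * lg (INR (size (Node c A0 Leaf)))) + 7 + 21 * (lg N + 1).
Proof.
  intros HN Hg. rewrite (decrease_key_nonroot _ _ _ _ _ _ _ Hg). cbn [fst].
  pose proof (tree_pot_cut_le N HN q A0 k l r Hg).
  pose proof (lost_large_bounds N A0 (replace A0 q r)).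
  pose proof (path_budget_le N (size (replace A0 q r))).
  pose proof (tree_pot_link_le N c y (replace A0 q r) l).
  pose proof (phi_nonneg N A0 Leaf).
  pose proof (size_replace q A0 r k l r Hg).
  replace (S (S (size (replace A0 q r) + size l))) with (size (Node c A0 Leaf)) in *
    by (simpl; lia).
  cbn [tree_pot edge_pot] in *. lra.
Qed.

Lemma decrease_key_pot_le N h p k l r y : heap_shape h -> -1 <= lg N ->
  get h p = Node k l r ->
  INR (snd (decrease_key h p y)) + tree_pot N (fst (decrease_key h p y)) - tree_pot N h
  <= 2 + 2 * (400 + 100 * lg (INR (size h))) + 7 + 21 * (lg N + 1).
Proof.
  intros [->|[c [A0 ->]]] HN Hg; [rewrite get_Leaf in Hg; discriminate|].
  pose proof (lg_nonneg (INR (size (Node c A0 Leaf))) (INR_S_ge1 _)).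
  destruct p as [|[] q]; simpl in Hg.
  - injection Hg as -> -> <-. cbn [decrease_key fst snd tree_pot].
    change (INR 1) with 1. lra.
  - destruct q; discriminate.
  - pose proof (tree_pot_decrease_key_le N c A0 q k l r y HN Hg).
    rewrite (decrease_key_nonroot _ _ _ _ _ _ _ Hg) in *. cbn [fst snd] in *.
    change (INR 2) with (1 + 1). lra.
Qed.

Theorem lemma4 :
  exists c : R,
    forall (h : bt) (N : R), reachable (h, N) ->
    forall (p : list bool) (k : R) (l r : bt) (y : R),
      get h p = Node k l r -> y < k ->
      dk_amortized h N p y <= c * (1 + lg (INR (size h))).
Proof.
  exists 1000. intros h N Hr p k l r y Hg _.
  destruct (reachable_invariant _ Hr) as [Hshape [_ [_ Hsticky]]]. simpl in *.
  assert (Hn : (1 <= size h)%nat)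
    by (destruct h; [rewrite get_Leaf in Hg; discriminate|simpl; lia]).
  specialize (Hsticky Hn). apply (le_INR 1) in Hn. simpl in Hn.
  pose proof (lg_nonneg _ Hn). pose proof (sticky_lg_bounds _ _ Hn Hsticky).
  pose proof (decrease_key_pot_le N h p k l r y Hshape ltac:(lra) Hg).
  destruct (decrease_key_shape h p k l r y Hshape Hg) as [_ Hsize].
  unfold dk_amortized, Phi. rewrite Hsize, updN_stable by lra. lra.
Qed.
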